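(* For every tree $T$, $\varphi(T)=\varphi_r(T)$.
   Context: A proper $k$-coloring of $G$ is a surjective map $c:V(G)\to\{1,\ldots,k\}$ with $c(u)\ne c(v)$ for every edge $uv$. In a proper $k$-coloring, a vertex of color $i$ is a b-vertex if it has a neighbor of every color $j\ne i$. A b-$k$-coloring is a proper $k$-coloring in which every color class contains a b-vertex; $\varphi(G)$ is the largest $k$ such that $G$ has a b-$k$-coloring, and the b-relaxed number is $\varphi_r(G)=\max\{\varphi(H): H\text{ an induced subgraph of }G\}$. *)

From mathcomp Require Import all_boot.
Set Implicit Arguments. Unset Strict Implicit. Unset Printing Implicit Defensive.

Definition simple_graph (V : finType) (e : rel V) : Prop :=
  irreflexive e /\ symmetric e.

Definition connected_graph (V : finType) (e : rel V) : Prop :=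
  forall x y : V, connect e x y.

Definition acyclic_graph (V : finType) (e : rel V) : Prop :=
  forall c : seq V, 3 <= size c -> uniq c -> ~~ cycle e c.

Definition is_tree (V : finType) (e : rel V) : Prop :=
  simple_graph e /\ 0 < #|V| /\ connected_graph e /\ acyclic_graph e.

(* b-k-coloring of the induced subgraph G[S]; only the values of c on S matter.
   Colors are 'I_k (i.e. {0,..,k-1}, standing for {1,..,k}). *)
Definition is_bcoloring (V : finType) (e : rel V) (S : {set V}) (k : nat)
    (c : V -> 'I_k) : bool :=
  [forall x in S, forall y in S, e x y ==> (c x != c y)] &&
  [forall i : 'I_k, exists x in S, c x == i] &&
  (* every color class contains a b-vertex *)
  [forall i : 'I_k, exists x in S, (c x == i) &&
      [forall j : 'I_k, (j != i) ==> [exists y in S, e x y && (c y == j)]]].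

Definition has_bcoloring (V : finType) (e : rel V) (S : {set V}) (k : nat) : bool :=
  [exists c : {ffun V -> 'I_k}, @is_bcoloring V e S k c].

(* phi(G[S]): largest k admitting a b-k-coloring (k <= |S| <= |V| by surjectivity) *)
Definition bchrom (V : finType) (e : rel V) (S : {set V}) : nat :=
  \max_(k < #|V|.+1 | has_bcoloring e S k) k.

Definition bchrom_graph (V : finType) (e : rel V) : nat := bchrom e [set: V].

Definition brelaxed (V : finType) (e : rel V) : nat :=
  \max_(S : {set V}) bchrom e S.

(* In a forest the neighbours of a vertex v lie in pairwise different
   components of the forest with v deleted.  Hence, given a b-k-colouring of
   an induced subgraph G[S] with k >= 2 and a vertex v outside S, the colours
   a and b can be swapped independently on the parts of these components
   lying in S.  If some colour a is missing around v we give v the colour a;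
   otherwise we give v the colour a and swap a and b on the components
   meeting the neighbours of colour a, so that v becomes a b-vertex of colour
   a while, for a suitable choice of a, a b-vertex of colour b survives.
   Adding the vertices of G one at a time, every b-k-colouring of an induced
   subgraph with k >= 2 yields one of G; the cases k <= 1 are trivial, since
   a graph with an edge has a b-2-colouring. *)
From mathcomp Require Import all_boot fingroup perm zify.
Set Implicit Arguments. Unset Strict Implicit. Unset Printing Implicit Defensive.

Section BColoring.
Variables (V : finType) (e : rel V).

Definition proper_on (S : {set V}) k (c : V -> 'I_k) : Prop :=
  forall x y, x \in S -> y \in S -> e x y -> c x != c y.

Definition bvertex (S : {set V}) k (c : V -> 'I_k) (x : V) : Prop :=
  forall j, j != c x -> exists2 y, y \in S & e x y /\ c y = j.

Lemma is_bcoloringP (S : {set V}) k (c : V -> 'I_k) :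
  is_bcoloring e S c <->
  proper_on S c /\ forall i, exists2 x, x \in S & c x = i /\ bvertex S c x.
Proof.
split.
- case/andP => /andP[/forall_inP pr _] /forallP bv; split.
    by move=> x y xS yS; move/forall_inP: (pr x xS) => /(_ y yS)/implyP.
  move=> i; case/exists_inP: (bv i) => x xS /andP[/eqP cx /forallP bx].
  exists x => //; split=> // j; rewrite cx => ji.
  by case/exists_inP: (implyP (bx j) ji) => y yS /andP[exy /eqP cy]; exists y.
- case=> pr cov; apply/andP; split; first (apply/andP; split).
  + apply/forall_inP => x xS; apply/forall_inP => y yS; apply/implyP; exact: pr.
  + apply/forallP => i; case: (cov i) => x xS [cx _].
    by apply/exists_inP; exists x; rewrite ?cx.
  + apply/forallP => i; case: (cov i) => x xS [cx bx].
    apply/exists_inP; exists x; rewrite // cx eqxx /=.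
    apply/forallP => j; apply/implyP; rewrite -cx => /bx[y yS [exy cy]].
    by apply/exists_inP; exists y; rewrite // exy cy eqxx.
Qed.

Lemma has_bcoloringI (S : {set V}) k (c : V -> 'I_k) :
  is_bcoloring e S c -> has_bcoloring e S k.
Proof.
case/is_bcoloringP => pr cov; apply/existsP; exists (finfun c).
apply/is_bcoloringP; split=> [x y xS yS|i]; first by rewrite !ffunE; apply: pr.
case: (cov i) => x xS [cx bx]; exists x; rewrite ?ffunE //; split=> // j.
by rewrite ffunE => /bx[y yS [exy cy]]; exists y; rewrite ?ffunE.
Qed.

Lemma leq_bchrom (S : {set V}) k :
  k <= #|V| -> has_bcoloring e S k -> k <= bchrom e S.
Proof. by rewrite -ltnS => kV; apply: (leq_bigmax_cond (Ordinal kV)). Qed.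

End BColoring.

Section Forest.
Variables (V : finType) (e : rel V).
Hypotheses (e_irr : irreflexive e) (e_sym : symmetric e).
Hypothesis e_acyclic : acyclic_graph e.

Definition del_vertex (v : V) : rel V := fun x y => [&& e x y, x != v & y != v].

Definition branch (v w : V) : {set V} := [set x | connect (del_vertex v) w x].

Lemma del_vertex_sym v : symmetric (del_vertex v).
Proof. by move=> x y; rewrite /del_vertex e_sym [(y != v) && _]andbC. Qed.

Lemma branch_refl v w : w \in branch v w.
Proof. by rewrite inE connect0. Qed.

Lemma branch_edge v w x y :
  x \in branch v w -> e x y -> x != v -> y != v -> y \in branch v w.
Proof.
rewrite !inE => wx exy xv yv; apply: connect_trans wx (connect1 _).
by rewrite /del_vertex exy xv yv.
Qed.

(* A path from w to w' avoiding v, closed up through v, would be a cycle. *)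
Lemma branch_neighbors v w w' :
  e v w -> e v w' -> w' \in branch v w -> w' = w.
Proof.
move=> evw evw'; rewrite inE => /connectP[p pp lp].
apply/eqP/negPn/negP => w'w.
case/shortenP: pp lp => q pq uq _ lq.
have wv : w != v by apply: contraTneq evw => ->; rewrite e_irr.
have qv : v \notin q.
  elim: q w {uq lq wv evw w'w} pq => //= y q IHq x /andP[/and3P[_ _ yv] /IHq].
  by rewrite inE negb_or eq_sym yv.
have size_c : 3 <= size (v :: w :: q).
  by case: q {pq uq qv} lq => [/= lq|//]; rewrite lq eqxx in w'w.
have uniq_c : uniq (v :: w :: q) by rewrite cons_uniq uq inE negb_or eq_sym wv qv.
have /negP := e_acyclic size_c uniq_c; apply.
rewrite /= evw rcons_path -lq e_sym evw' andbT.
by apply: sub_path pq => x y /and3P[].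
Qed.

Lemma branch_disjoint v w w' x :
  e v w -> e v w' -> x \in branch v w -> x \in branch v w' -> w' = w.
Proof.
move=> evw evw'; rewrite !inE => wx xw'; apply: branch_neighbors evw evw' _.
by rewrite inE (connect_trans wx) // (sym_connect_sym (@del_vertex_sym v)).
Qed.

Section Extension.
Variables (S : {set V}) (k : nat) (c : V -> 'I_k) (v : V).
Hypothesis vS : v \notin S.
Hypothesis c_bcol : is_bcoloring e S c.

Let c_proper : proper_on e S c := (proj1 (is_bcoloringP e S c) c_bcol).1.
Let c_bvertex : forall i, exists2 x, x \in S & c x = i /\ bvertex e S c x :=
  (proj1 (is_bcoloringP e S c) c_bcol).2.

Definition color_branches (a : 'I_k) : {set V} :=
  [set x in S | [exists w in S, [&& e v w, c w == a & x \in branch v w]]].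

Definition extend (a b : 'I_k) (x : V) : 'I_k :=
  if x == v then a else if x \in color_branches a then tperm a b (c x) else c x.

Lemma neq_vertex x : x \in S -> x != v.
Proof. by apply: contraTneq => ->. Qed.

Lemma color_branches_edge a x y : x \in S -> y \in S -> e x y ->
  (x \in color_branches a) = (y \in color_branches a).
Proof.
have step x' y' : x' \in S -> y' \in S -> e x' y' ->
    x' \in color_branches a -> y' \in color_branches a.
  move=> x'S y'S ex'y'; rewrite !inE x'S y'S => /exists_inP[w wS /and3P[evw cw wx']].
  apply/exists_inP; exists w; rewrite // evw cw /=.
  exact: branch_edge wx' ex'y' (neq_vertex x'S) (neq_vertex y'S).
move=> xS yS exy; apply/idP/idP; first exact: step.
by apply: step; rewrite // e_sym.
Qed.

Lemma color_branches_neighbor a w : w \in S -> e v w ->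
  (w \in color_branches a) = (c w == a).
Proof.
move=> wS evw; rewrite inE wS; apply/exists_inP/idP => [[w' _ /and3P[ev' cw' ww']]|cw].
  by rewrite -(branch_disjoint evw ev' (branch_refl v w) ww').
by exists w; rewrite // evw cw branch_refl.
Qed.

Lemma color_branches_disjoint a a' x :
  x \in color_branches a -> x \in color_branches a' -> a = a'.
Proof.
rewrite !inE => /andP[_ /exists_inP[w _ /and3P[evw /eqP <- wx]]].
case/andP=> _ /exists_inP[w' _ /and3P[evw' /eqP <- w'x]].
by rewrite (branch_disjoint evw evw' wx w'x).
Qed.

Lemma extend_S a b x : x \in S ->
  extend a b x = if x \in color_branches a then tperm a b (c x) else c x.
Proof. by move=> xS; rewrite /extend (negbTE (neq_vertex xS)). Qed.

Lemma extend_proper a b :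
  (forall w, w \in S -> e v w -> extend a b w != a) ->
  proper_on e (v |: S) (extend a b).
Proof.
move=> nbv x y; rewrite !inE => /predU1P[->|xS] /predU1P[->|yS] exy.
- by rewrite e_irr in exy.
- by rewrite {1}/extend eqxx eq_sym nbv.
- by rewrite {2}/extend eqxx nbv // e_sym.
- rewrite !extend_S // -(color_branches_edge a xS yS exy).
  by case: ifP => _; rewrite ?(inj_eq perm_inj); apply: c_proper.
Qed.

Lemma extend_bvertex a b x :
  x \in S -> bvertex e S c x -> bvertex e (v |: S) (extend a b) x.
Proof.
move=> xS bx j; rewrite extend_S //.
have inS y : y \in S -> y \in v |: S by move=> yS; rewrite setU1r.
case: ifPn => xU ji.
- have /bx[y yS [exy cy]] : tperm a b j != c x.
    by rewrite -(inj_eq (@perm_inj _ (tperm a b))) tpermK.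
  by exists y; rewrite ?inS // extend_S // -(color_branches_edge a xS yS exy) xU cy tpermK.
- have /bx[y yS [exy cy]] := ji.
  by exists y; rewrite ?inS // extend_S // -(color_branches_edge a xS yS exy) (negbTE xU).
Qed.

Lemma extend_bvertex_new a b :
  (forall j, j != a -> exists2 w, w \in S & e v w /\ c w = j) ->
  bvertex e (v |: S) (extend a b) v.
Proof.
move=> nb j; rewrite {1}/extend eqxx => /[dup] ja /nb[w wS [evw cw]].
exists w; first by rewrite setU1r.
by rewrite extend_S // color_branches_neighbor // cw (negbTE ja).
Qed.

Lemma extend_missing a :
  (forall w, w \in S -> e v w -> c w != a) ->
  is_bcoloring e (v |: S) (extend a a).
Proof.
have ext x : x \in S -> extend a a x = c x.
  by move=> xS; rewrite extend_S // tperm1 perm1 if_same.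
move=> miss; apply/is_bcoloringP; split.
  by apply: extend_proper => w wS evw; rewrite ext // miss.
move=> i; have [x xS [cx bx]] := c_bvertex i.
by exists x; rewrite ?setU1r ?ext //; split=> //; apply: extend_bvertex.
Qed.

Lemma extend_complete a b :
  a != b -> (forall j, exists2 w, w \in S & e v w /\ c w = j) ->
  (exists2 x, x \in v |: S & extend a b x = b /\ bvertex e (v |: S) (extend a b) x) ->
  is_bcoloring e (v |: S) (extend a b).
Proof.
move=> ab nb vb; apply/is_bcoloringP; split.
  apply: extend_proper => w wS evw; rewrite extend_S // color_branches_neighbor //.
  by case: (eqVneq (c w) a) => [->|cwa]; rewrite ?tpermL // eq_sym.
move=> i; case: (eqVneq i a) => [->|ia].
  exists v; rewrite ?setU11 /extend ?eqxx //; split=> //.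
  by apply: extend_bvertex_new => j _; apply: nb.
case: (eqVneq i b) => [->//|ib].
have [x xS [cx bx]] := c_bvertex i.
exists x; rewrite ?setU1r //; split; last exact: extend_bvertex.
by rewrite extend_S // cx tpermD 1?eq_sym // if_same.
Qed.

Lemma extend_bcoloring : 1 < k -> exists a b, is_bcoloring e (v |: S) (extend a b).
Proof.
move=> k_gt1.
have [/existsP[a /forall_inP miss]|/existsPn full] :=
  boolP [exists a, [forall w in S, e v w ==> (c w != a)]].
  by exists a, a; apply: extend_missing => w wS; apply/implyP/miss.
have nb j : exists2 w, w \in S & e v w /\ c w = j.
  move/forall_inPn: (full j) => [w wS]; rewrite negb_imply negbK.
  by case/andP => evw /eqP cw; exists w.
pose b := Ordinal (ltnW k_gt1).
have [x xS [cx bx]] := c_bvertex b.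
have [/existsP[a /andP[ab xU]]|/existsPn inU] :=
  boolP [exists a, (a != b) && (x \notin color_branches a)].
  exists a, b; apply: extend_complete => //; exists x; rewrite ?setU1r //.
  by rewrite extend_S // (negbTE xU) cx; split=> //; apply: extend_bvertex.
(* x lies in the branches of every colour other than b, and these are
   disjoint: the only such colour is a, and w can serve as b-vertex. *)
have xU a : a != b -> x \in color_branches a.
  by move=> ab; move: (inU a); rewrite ab negbK.
pose a := Ordinal k_gt1; have ab : a != b by [].
exists a, b; apply: extend_complete => //.
have [w wS [evw cw]] := nb a.
have wU : w \in color_branches a by rewrite color_branches_neighbor // cw.
exists w; rewrite ?setU1r // extend_S // wU cw tpermL; split=> // j.
rewrite extend_S // wU cw tpermL => jb.
exists v; first exact: setU11.
rewrite e_sym evw /extend eqxx; split=> //.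
exact: color_branches_disjoint (xU a ab) (xU j jb).
Qed.

End Extension.

Lemma has_bcoloring_setU1 (S : {set V}) k v :
  1 < k -> v \notin S -> has_bcoloring e S k -> has_bcoloring e (v |: S) k.
Proof.
move=> k_gt1 vS /existsP[c c_bcol].
by have [a [b]] := extend_bcoloring vS c_bcol k_gt1; apply: has_bcoloringI.
Qed.

Lemma has_bcoloring_setT (S : {set V}) k :
  1 < k -> has_bcoloring e S k -> has_bcoloring e [set: V] k.
Proof.
move=> k_gt1; move cardS: #|~: S| => n; elim: n S cardS => [|n IHn] S cardS hS.
  by move/eqP: cardS; rewrite cards_eq0 => /eqP S0; rewrite -[S]setCK S0 setC0 in hS.
have [v vS] : exists v, v \in ~: S by apply/card_gt0P; rewrite cardS.
apply: (IHn (v |: S)); last by apply: has_bcoloring_setU1; rewrite // -in_setC.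
by move: cardS; rewrite (cardsD1 v) vS add1n setCU setIC -setDE => [[]].
Qed.

Lemma has_bcoloring_edge x y : e x y -> has_bcoloring e [set x; y] 2.
Proof.
move=> exy; have yx : (y == x) = false by apply: contraTF exy => /eqP->; rewrite e_irr.
apply: (@has_bcoloringI _ _ _ _ (fun z => if z == x then ord0 else ord_max)).
apply/is_bcoloringP; split.
  by move=> u w; rewrite !inE => /orP[]/eqP-> /orP[]/eqP->; rewrite ?e_irr ?eqxx ?yx.
have other0 (i : 'I_2) : i != ord0 -> i = ord_max.
  by case: i => [[|[]]] //= ? _; apply/val_inj.
have other1 (i : 'I_2) : i != ord_max -> i = ord0.
  by case: i => [[|[]]] //= ? _; apply/val_inj.
move=> i; case: (eqVneq i ord0) => [->|/other0->].
  exists x; rewrite ?inE ?eqxx //; split=> // j; rewrite eqxx => /other0->.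
  by exists y; rewrite ?inE ?eqxx ?orbT // exy yx.
exists y; rewrite ?inE ?eqxx ?orbT // yx; split=> // j; rewrite yx => /other1->.
by exists x; rewrite ?inE ?eqxx // e_sym exy.
Qed.

Lemma bchrom_setT_gt0 : 0 < #|V| -> 0 < bchrom e [set: V].
Proof.
move=> V_gt0; have [/existsP[x /existsP[y exy]]|/existsPn noedge] :=
  boolP [exists x, exists y, e x y].
  have xy : x != y by apply: contraTneq exy => ->; rewrite e_irr.
  apply: (@leq_trans 2) => //; apply: leq_bchrom.
    by have := max_card [set x; y]; rewrite cards2 xy.
  exact: has_bcoloring_setT (has_bcoloring_edge exy).
have [x _] := card_gt0P V_gt0.
apply: leq_bchrom => //; apply: (@has_bcoloringI _ _ _ _ (fun=> ord0)).
apply/is_bcoloringP; split=> [u w _ _|i].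
  by move/existsPn: (noedge u) => /(_ w)/negbTE->.
by exists x; rewrite ?inE ?(ord1 i) //; split=> // j; rewrite (ord1 j) eqxx.
Qed.

Lemma bchrom_le_setT (S : {set V}) : bchrom e S <= bchrom e [set: V].
Proof.
apply/bigmax_leqP => -[k kV] /= hk.
have [k_gt1|k_le1] := ltnP 1 k.
  by apply: leq_bchrom; [rewrite -ltnS | exact: has_bcoloring_setT hk].
by move: bchrom_setT_gt0; lia.
Qed.

End Forest.

Theorem mainTheorem18 (V : finType) (e : rel V) :
  is_tree e -> bchrom_graph e = brelaxed e.
Proof.
move=> [[e_irr e_sym] [_ [_ e_acyclic]]].
apply/eqP; rewrite eqn_leq /bchrom_graph /brelaxed.
rewrite (leq_bigmax_cond (P := predT) (F := fun S => bchrom e S) [set: V]) //=.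
by apply/bigmax_leqP => S _; apply: bchrom_le_setT.
Qed.
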